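(* For infinitely many $n\in\mathbb{N}$ there exist matroids $M=(E,\mathcal{I})$ and $M'=(E,\mathcal{I}')$ over the same ground set $E$ with $|E|=n$ and a weight function $w:E\to\{0,1\}$ such that $M$ and $M'$ have exactly two common bases $B$ and $B'$, and these satisfy: (1) $w(B)=0$ and $w(B')=1$; (2) $B\cap B'=\emptyset$ and $|B|=|B'|=n/2$.
   Context: A common basis of $M$ and $M'$ is a set that is a basis of both. $w(S)=\sum_{e\in S}w(e)$. *)

From mathcomp Require Import all_boot.
Set Implicit Arguments. Unset Strict Implicit. Unset Printing Implicit Defensive.

Definition is_matroid (T : finType) (I : {set {set T}}) : Prop :=
  [/\ set0 \in I,
      (forall A B : {set T}, B \in I -> A \subset B -> A \in I) &
      (forall A B : {set T}, A \in I -> B \in I -> #|A| < #|B| ->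
          exists2 e, e \in B :\: A & e |: A \in I)].

Definition is_basis (T : finType) (I : {set {set T}}) (B : {set T}) : Prop :=
  B \in I /\ (forall C : {set T}, C \in I -> B \subset C -> C = B).

Definition common_basis (T : finType) (I I' : {set {set T}}) (B : {set T}) : Prop :=
  is_basis I B /\ is_basis I' B.

Definition wsum (T : finType) (w : T -> nat) (S : {set T}) : nat :=
  \sum_(e in S) w e.

(* Arrange the ground set {0, ..., 2k-1} on a cycle and take the two partition
   matroids whose blocks are the edges {2i, 2i+1}, resp. {2i+1, 2i+2 mod 2k}, of
   that cycle.  A common basis meets every edge of the cycle in exactly one
   element, so membership alternates around the cycle: the only common bases are
   the even and the odd elements, two disjoint halves of the ground set.  A weight
   that is 1 on a single odd element and 0 elsewhere separates them. *)

From mathcomp Require Import all_boot zify.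
Set Implicit Arguments. Unset Strict Implicit. Unset Printing Implicit Defensive.

Section PartitionMatroid.
Variables (T K : finType) (blk : T -> K).

Definition partition_matroid : {set {set T}} := [set A : {set T} | dinjectiveb blk A].

Lemma partition_matroidP (A : {set T}) :
  reflect {in A &, injective blk} (A \in partition_matroid).
Proof. by rewrite inE; apply: dinjectiveP. Qed.

Lemma partition_matroidU1 (A : {set T}) e :
  A \in partition_matroid -> blk e \notin blk @: A -> e |: A \in partition_matroid.
Proof.
move=> /partition_matroidP injA blk_eA; apply/partition_matroidP => x y.
rewrite !inE => /predU1P[-> | xA] /predU1P[-> | yA] // blk_xy.
- by rewrite blk_xy imset_f in blk_eA.
- by rewrite -blk_xy imset_f in blk_eA.
- exact: injA.
Qed.

Lemma partition_matroid_is_matroid : is_matroid partition_matroid.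
Proof.
split.
- by apply/partition_matroidP => x; rewrite inE.
- move=> A B /partition_matroidP injB sAB; apply/partition_matroidP.
  by move=> x y xA yA; apply: injB; apply: (subsetP sAB).
- move=> A B AI /partition_matroidP injB ltAB.
  have /subsetPn[_ /imsetP[e eB ->] blk_eA] : ~~ (blk @: B \subset blk @: A).
    apply: contraTN ltAB => /subset_leq_card.
    by rewrite !card_in_imset //; [rewrite -leqNgt | apply/partition_matroidP].
  exists e; last exact: partition_matroidU1.
  by rewrite inE eB andbT; apply: contraNN blk_eA; apply: imset_f.
Qed.

Lemma partition_basisP (C : {set T}) :
  is_basis partition_matroid C <->
  {in C &, injective blk} /\ (forall x, blk x \in blk @: C).
Proof.
split=> [[CI maxC] | [injC coverC]].
- split=> [|x]; first exact/partition_matroidP.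
  apply: contraT => blk_xC.
  have xC : x \in C.
    by rewrite -(maxC _ (partition_matroidU1 CI blk_xC) (subsetUr _ _)) setU11.
  by rewrite imset_f in blk_xC.
- split=> [|D /partition_matroidP injD sCD]; first exact/partition_matroidP.
  apply/eqP; rewrite eqEsubset sCD andbT; apply/subsetP => d dD.
  have /imsetP[c cC blk_dc] := coverC d.
  by rewrite (injD d c dD (subsetP sCD c cC) blk_dc).
Qed.

Definition is_pairing (P : pred T) (s : T -> T) : Prop :=
  [/\ forall x, P x -> s x != x,
      forall x y, P x -> (blk y == blk x) = (y == x) || (y == s x) &
      forall y, exists2 x, P x & blk y = blk x].

Lemma paired_basisP P s (C : {set T}) : is_pairing P s ->
  is_basis partition_matroid C <-> (forall x, P x -> (s x \in C) = (x \notin C)).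
Proof.
case=> s_neq blk_pair blk_rep.
have blk_s x : P x -> blk (s x) = blk x.
  by move=> Px; apply/eqP; rewrite blk_pair // eqxx orbT.
rewrite partition_basisP; split=> [[injC coverC] x Px | alt].
- apply/idP/idP => [sxC | xNC].
  + apply: contraNN (s_neq x Px) => xC; apply/eqP; exact: injC (blk_s x Px).
  + have /imsetP[c cC /esym/eqP] := coverC x.
    by rewrite blk_pair // => /orP[/eqP cx | /eqP <-] //; rewrite -cx cC in xNC.
- split=> [x y xC yC blk_xy | y].
  + have [z Pz blk_xz] := blk_rep x.
    have hx : (x == z) || (x == s z) by rewrite -blk_pair ?blk_xz.
    have hy : (y == z) || (y == s z) by rewrite -blk_pair // -blk_xy blk_xz.
    have := alt z Pz.
    by case/orP: hx xC => /eqP-> xC; case/orP: hy yC => /eqP-> yC //; rewrite xC yC.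
  + have [x Px ->] := blk_rep y.
    have [xC | xNC] := boolP (x \in C); first exact: imset_f.
    by rewrite -(blk_s x Px) imset_f // alt.
Qed.

End PartitionMatroid.

Section EvenCycle.
Variable k : nat.
Local Notation n := k.+1.*2.
Implicit Types (x y : 'I_n) (C : {set 'I_n}).

Lemma odd_ordS x : odd (ordS x) = ~~ odd x.
Proof. by rewrite /= odd_mod ?odd_double. Qed.

Lemma ordS_even x : ~~ odd x -> ordS x = x.+1 :> nat.
Proof. by move=> ev; rewrite /= modn_small //; have := ltn_ord x; lia. Qed.

Lemma ordS_neq x : ordS x != x.
Proof. by apply/negP => /eqP sx; have := odd_ordS x; rewrite sx; case: odd. Qed.

Lemma odd_ord_pred y : odd (ord_pred y) = ~~ odd y.
Proof. by rewrite -[in RHS](ord_predK y) odd_ordS negbK. Qed.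

Fact pair_blk_subproof x : x./2 < k.+1.
Proof. by rewrite ltn_half_double. Qed.

Definition pair_blk x : 'I_k.+1 := Ordinal (pair_blk_subproof x).

Lemma pair_blkE x : pair_blk x = x./2 :> nat.
Proof. by []. Qed.

Definition shifted_pair_blk x : 'I_k.+1 := pair_blk (ordS x).

Lemma pair_blk_pairing : is_pairing pair_blk (fun x => ~~ odd x) (@ordS n).
Proof.
split=> [x _ | x y ev | y]; first exact: ordS_neq.
- by rewrite -!(inj_eq (@ord_inj _)) !pair_blkE ordS_even //; lia.
- have [yo | ye] := boolP (odd y); last by exists y.
  have ev : ~~ odd (ord_pred y) by rewrite odd_ord_pred yo.
  exists (ord_pred y) => //; rewrite -{1}(ord_predK y).
  by apply: ord_inj; rewrite !pair_blkE ordS_even //; lia.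
Qed.

Lemma shifted_pair_blk_pairing : is_pairing shifted_pair_blk odd (@ordS n).
Proof.
have [_ pair_eq pair_rep] := pair_blk_pairing.
split=> [x _ | x y xo | y]; first exact: ordS_neq.
- by rewrite /shifted_pair_blk pair_eq ?odd_ordS ?xo // !(inj_eq (@ordS_inj _)).
- have [x ev blk_yx] := pair_rep (ordS y).
  by exists (ord_pred x); rewrite ?odd_ord_pred // /shifted_pair_blk ord_predK.
Qed.

Definition evens : {set 'I_n} := [set x : 'I_n | ~~ odd x].
Definition odds : {set 'I_n} := [set x : 'I_n | odd x].

Lemma ordS_alternatingP C :
  (forall x, (ordS x \in C) = (x \notin C)) <-> C = evens \/ C = odds.
Proof.
split=> [alt | [->|->] x]; [|by rewrite !inE odd_ordS..].
have mem_odd x : (x \in C) = odd x (+) (ord0 \in C).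
  case: x => i; elim: i => [|i IH] lt_in; first by congr (_ \in C); apply: val_inj.
  have -> : Ordinal lt_in = ordS (Ordinal (ltnW lt_in)).
    by apply: val_inj; rewrite /= modn_small.
  by rewrite alt IH odd_ordS addNb.
move: mem_odd; case: (ord0 \in C) => mem_odd; [left|right];
  by apply/setP => x; rewrite mem_odd inE ?addbT ?addbF.
Qed.

Lemma common_basis_pair_blkP C :
  common_basis (partition_matroid pair_blk) (partition_matroid shifted_pair_blk) C
  <-> C = evens \/ C = odds.
Proof.
rewrite /common_basis (paired_basisP _ pair_blk_pairing).
rewrite (paired_basisP _ shifted_pair_blk_pairing) -ordS_alternatingP.
split=> [[alt_even alt_odd] x | alt]; last by split=> x _; apply: alt.
by case: (boolP (odd x)) => [/alt_odd | /alt_even].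
Qed.

Lemma odds_setC : odds = ~: evens.
Proof. by apply/setP => x; rewrite !inE negbK. Qed.

Lemma ordS_evens : (@ordS n) @: evens = odds.
Proof.
apply/setP => y; rewrite inE; apply/imsetP/idP => [[x ev ->] | yo].
- by rewrite inE in ev; rewrite odd_ordS.
- by exists (ord_pred y); rewrite ?ord_predK // inE odd_ord_pred yo.
Qed.

Lemma card_odds : #|odds| = #|evens|.
Proof. by rewrite -ordS_evens card_imset //; apply: ordS_inj. Qed.

Lemma card_evens : 2 * #|evens| = n.
Proof. by rewrite mul2n -addnn -{2}card_odds odds_setC cardsC card_ord. Qed.

End EvenCycle.

Lemma wsum_indicator (T : finType) (e : T) (S : {set T}) :
  wsum (fun x => nat_of_bool (x == e)) S = (e \in S).
Proof.
rewrite /wsum big_mkcond (bigD1 e) //= eqxx big1 ?addn0 => [|x /negbTE xe].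
- by case: (e \in S).
- by rewrite xe if_same.
Qed.

Theorem theorem19 :
  forall N : nat, exists2 n : nat, N <= n &
    exists (I I' : {set {set 'I_n}}) (w : 'I_n -> nat),
      [/\ is_matroid I, is_matroid I' & forall e, w e <= 1] /\
      exists (B B' : {set 'I_n}),
        [/\ B != B',
            (forall C : {set 'I_n}, common_basis I I' C <-> (C = B \/ C = B')),
            wsum w B = 0 /\ wsum w B' = 1 &
            [/\ [disjoint B & B'], 2 * #|B| = n & 2 * #|B'| = n]].
Proof.
move=> N; exists N.+1.*2; first lia.
exists (partition_matroid (@pair_blk N)), (partition_matroid (@shifted_pair_blk N)).
exists (fun x => nat_of_bool (x == ordS ord0)).
split; first by split=> [||e]; rewrite ?leq_b1 //; apply: partition_matroid_is_matroid.
exists (evens N), (odds N); split.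
- by apply/negP => /eqP/setP/(_ ord0); rewrite !inE.
- exact: common_basis_pair_blkP.
- by rewrite !wsum_indicator !inE odd_ordS.
- by rewrite card_odds card_evens odds_setC disjoints_subset setCK subxx.
Qed.
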